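(* Let $F$ be a cumulative distribution function on $[0,\infty)$ with a density and finite positive mean $\mu$. Let $B,S$ be independent with distribution $F$ and let the price $p\sim F$ be drawn independently. Then \[\mathbb{E}_{p\sim F}\big[\mathsf{W}(p,F)\big]\ \ge\ \tfrac34\,\mathsf{OPT\text{-}W}(F).\]
   Context: Symmetric bilateral trade: $B$ (buyer's value) and $S$ (seller's value) are i.i.d. with distribution $F$. Posting price $p$, trade occurs iff $B\ge p>S$ (immaterial for continuous $F$). Welfare of price $p$: $\mathsf{W}(p,F)=\mathbb{E}[S]+\mathbb{E}[(B-S)\mathbf 1_{B\ge p>S}]$. Optimal welfare: $\mathsf{OPT\text{-}W}(F)=\mathbb{E}[S]+\mathbb{E}[(B-S)\mathbf 1_{B>S}]=\mathbb{E}[\max\{B,S\}]$. *)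

From mathcomp Require Import all_boot all_order all_algebra.
From mathcomp Require Import all_classical all_reals all_analysis.
Set Implicit Arguments. Unset Strict Implicit. Unset Printing Implicit Defensive.
Import Order.TTheory GRing.Theory Num.Theory.
Local Open Scope ring_scope.
Local Open Scope ereal_scope.

Section BilateralTrade.
Variable R : realType.
Notation mu := (@lebesgue_measure R).

(* The distribution F is given by its density f w.r.t. Lebesgue measure. *)
Definition is_density_on_nonneg (f : R -> R) : Prop :=
  [/\ measurable_fun setT f,
      (forall x, (0 <= f x)%R),
      (forall x, (x < 0)%R -> f x = 0%R) &
      \int[mu]_x (f x)%:E = 1].

Definition mean (f : R -> R) : \bar R := \int[mu]_x (x * f x)%:E.

Definition welfare (p : R) (f : R -> R) : \bar R :=
  mean f +
  \int[mu]_s (\int[mu]_b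
      ((b - s) * ((p <= b) && (s < p))%:R * f b * f s)%:E).

Definition opt_welfare (f : R -> R) : \bar R :=
  \int[mu]_s (\int[mu]_b (Num.max b s * f b * f s)%:E).

Definition expected_random_price_welfare (f : R -> R) : \bar R :=
  \int[mu]_p ((f p)%:E * welfare p f).

End BilateralTrade.

(* Both sides are triple integrals, over independent p, s, b ~ F, of the product density
   f(p) f(s) f(b) times a kernel: max(s, b) for OPT-W and s + (b - s) [s < p <= b] for the
   expected welfare of a random price.  Ties p = s have probability zero, so the indicator may be
   replaced by the closed one [s <= p <= b].  As the product density is symmetric, each integral
   is 1/6 of the integral of the kernel summed over the six permutations of (p, s, b), and it is
   enough to compare these symmetrized kernels pointwise on [0, oo)^3.  For a <= b <= c the
   maxima sum to 2b + 4c, while the welfare kernels sum to at least 2(a + b + c) + (c - a), the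
   last term coming from the order s = a <= p = b <= b = c; and 3/4 (2b + 4c) <= a + 2b + 3c. *)

From mathcomp Require Import all_boot all_order all_algebra.
From mathcomp Require Import all_classical all_reals all_analysis.
From mathcomp Require Import measurable_realfun.
From mathcomp Require Import ring lra.
Import Order.TTheory GRing.Theory Num.Theory.
Local Open Scope ring_scope.

Section symmetrization.
Context {T : Type} {V : nmodType}.

Definition swap12 (x : T * T * T) : T * T * T := (x.1.2, x.1.1, x.2).
Definition swap23 (x : T * T * T) : T * T * T := (x.1.1, x.2, x.1.2).
Definition rot (x : T * T * T) : T * T * T := (x.2, x.1.1, x.1.2).

Definition sym12 (G : T * T * T -> V) : T * T * T -> V := G \+ (G \o swap12).

Definition cyc3 (G : T * T * T -> V) : T * T * T -> V :=
  G \+ (G \o rot) \+ (G \o rot \o rot).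

(* The sum of G over all six permutations of the coordinates: S3 = <rot> {id, swap12}. *)
Definition sym3 (G : T * T * T -> V) : T * T * T -> V := cyc3 (sym12 G).

End symmetrization.

(* Keeps [g (swap12 x)] and [g (rot x)] folded under [/=], for rewriting in sym3_mull. *)
Arguments swap12 {T} x : simpl never.
Arguments rot {T} x : simpl never.

Lemma sym3_mull {T} {V : pzSemiRingType} (g G : T * T * T -> V) :
  (forall x, g (swap12 x) = g x) -> (forall x, g (rot x) = g x) ->
  sym3 (g \* G) = g \* sym3 G.
Proof.
by move=> g12 grot; apply/funext => x; rewrite /sym3 /cyc3 /sym12 /= !(g12, grot) -!mulrDr.
Qed.

Section measurable_triples.
Context {d1 d2 d3 : measure_display} {T1 : measurableType d1}
  {T2 : measurableType d2} {T3 : measurableType d3}.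

Lemma measurable_fst_fst : measurable_fun setT (fun x : T1 * T2 * T3 => x.1.1).
Proof. exact: measurableT_comp measurable_fst measurable_fst. Qed.

Lemma measurable_snd_fst : measurable_fun setT (fun x : T1 * T2 * T3 => x.1.2).
Proof. exact: measurableT_comp measurable_snd measurable_fst. Qed.

End measurable_triples.

Section measurable_permutations.
Context {d : measure_display} {T : measurableType d}.

Lemma measurable_swap12 : measurable_fun setT (@swap12 T).
Proof.
by apply: measurable_fun_pair => //; apply: measurable_fun_pair;
  [exact: measurable_snd_fst | exact: measurable_fst_fst].
Qed.

Lemma measurable_swap23 : measurable_fun setT (@swap23 T).
Proof.
apply: measurable_fun_pair; last exact: measurable_snd_fst.
by apply: measurable_fun_pair => //; exact: measurable_fst_fst.
Qed.

Lemma measurable_rot : measurable_fun setT (@rot T).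
Proof. exact: measurableT_comp measurable_swap12 measurable_swap23. Qed.

End measurable_permutations.

Section fubini_EFin.
Local Open Scope ereal_scope.
Context {d1 d2 : measure_display} {T1 : measurableType d1} {T2 : measurableType d2}
  {R : realType}.
Variable mu : {sigma_finite_measure set T2 -> \bar R}.

Lemma measurable_fun_integral_EFin (g : T1 * T2 -> R) :
  measurable_fun setT g -> (forall z, 0 <= g z)%R ->
  measurable_fun setT (fun x => \int[mu]_y (g (x, y))%:E).
Proof.
move=> mg g0; apply: (measurable_fun_fubini_tonelli_F (fun z => (g z)%:E)).
  exact/measurable_EFinP.
by move=> z; rewrite lee_fin.
Qed.

End fubini_EFin.

Section iterated_integral.
Local Open Scope ereal_scope.
Context {d : measure_display} {T : measurableType d} {R : realType}.
Variable mu : {sigma_finite_measure set T -> \bar R}.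

Definition iint2 (g : T * T -> R) : \bar R := \int[mu]_x \int[mu]_y (g (x, y))%:E.

Definition iint3 (G : T * T * T -> R) : \bar R :=
  \int[mu]_x iint2 (fun yz => G (x, yz.1, yz.2)).

Lemma iint2_ge0 g : (forall z, 0 <= g z)%R -> 0 <= iint2 g.
Proof.
by move=> g0; apply: integral_ge0 => x _; apply: integral_ge0 => y _; rewrite lee_fin.
Qed.

Lemma measurable_fun_slice2 (g : T * T -> R) x :
  measurable_fun setT g -> measurable_fun setT (fun y => (g (x, y))%:E).
Proof. by move=> mg; apply/measurable_EFinP; exact: measurable_fun_pair2. Qed.

Lemma measurable_fun_slice3 (G : T * T * T -> R) x :
  measurable_fun setT G -> measurable_fun setT (fun yz : T * T => G (x, yz.1, yz.2)).
Proof.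
move=> mG; apply: measurableT_comp mG _.
by apply: measurable_fun_pair => //; apply: measurable_fun_pair.
Qed.

Lemma measurable_fun_iint3_inner (G : T * T * T -> R) :
  measurable_fun setT G -> (forall x, 0 <= G x)%R ->
  measurable_fun setT (fun x => iint2 (fun yz => G (x, yz.1, yz.2))).
Proof.
move=> mG G0.
apply: (measurable_fun_fubini_tonelli_F (fun xy => \int[mu]_z (G (xy, z))%:E)).
  exact: measurable_fun_integral_EFin.
by move=> xy; apply: integral_ge0 => z _; rewrite lee_fin.
Qed.

Lemma iint2D (g1 g2 : T * T -> R) : measurable_fun setT g1 -> measurable_fun setT g2 ->
  (forall z, 0 <= g1 z)%R -> (forall z, 0 <= g2 z)%R ->
  iint2 (g1 \+ g2)%R = iint2 g1 + iint2 g2.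
Proof.
move=> mg1 mg2 g10 g20; rewrite /iint2 -ge0_integralD//; first last.
- exact: measurable_fun_integral_EFin.
- by move=> x _; apply: integral_ge0 => y _; rewrite lee_fin.
- exact: measurable_fun_integral_EFin.
- by move=> x _; apply: integral_ge0 => y _; rewrite lee_fin.
apply: eq_integral => x _; under eq_integral do rewrite EFinD.
by rewrite ge0_integralD// => [y _||y _|]; rewrite ?lee_fin//; exact: measurable_fun_slice2.
Qed.

Lemma iint2Zl (c : R) (g : T * T -> R) : (0 <= c)%R ->
  measurable_fun setT g -> (forall z, 0 <= g z)%R ->
  iint2 (fun z => c * g z)%R = c%:E * iint2 g.
Proof.
move=> c0 mg g0; rewrite /iint2 -ge0_integralZl_EFin//; first last.
- exact: measurable_fun_integral_EFin.
- by move=> x _; apply: integral_ge0 => y _; rewrite lee_fin.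
apply: eq_integral => x _; under eq_integral do rewrite EFinM.
by rewrite ge0_integralZl_EFin// => [y _|]; rewrite ?lee_fin//; exact: measurable_fun_slice2.
Qed.

Lemma le_iint2 (g1 g2 : T * T -> R) :
  measurable_fun setT g1 -> measurable_fun setT g2 ->
  (forall z, 0 <= g1 z)%R -> (forall z, g1 z <= g2 z)%R -> iint2 g1 <= iint2 g2.
Proof.
move=> mg1 mg2 g10 g12.
have g20 z : (0 <= g2 z)%R by exact: le_trans (g10 z) (g12 z).
apply: ge0_le_integral => //.
- by move=> x _; apply: integral_ge0 => y _; rewrite lee_fin.
- exact: measurable_fun_integral_EFin.
- exact: measurable_fun_integral_EFin.
move=> x _; apply: ge0_le_integral => //; do ?exact: measurable_fun_slice2.
- by move=> y _; rewrite lee_fin.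
- by move=> y _; rewrite lee_fin.
Qed.

Lemma iint3D (G1 G2 : T * T * T -> R) :
  measurable_fun setT G1 -> measurable_fun setT G2 ->
  (forall x, 0 <= G1 x)%R -> (forall x, 0 <= G2 x)%R ->
  iint3 (G1 \+ G2)%R = iint3 G1 + iint3 G2.
Proof.
move=> mG1 mG2 G10 G20; rewrite /iint3 -ge0_integralD//; first last.
- exact: measurable_fun_iint3_inner.
- by move=> x _; exact: iint2_ge0.
- exact: measurable_fun_iint3_inner.
- by move=> x _; exact: iint2_ge0.
by apply: eq_integral => x _; rewrite -iint2D//; exact: measurable_fun_slice3.
Qed.

Lemma iint3Zl (c : R) (G : T * T * T -> R) : (0 <= c)%R ->
  measurable_fun setT G -> (forall x, 0 <= G x)%R ->
  iint3 (fun x => c * G x)%R = c%:E * iint3 G.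
Proof.
move=> c0 mG G0; rewrite /iint3 -ge0_integralZl_EFin//; first last.
- exact: measurable_fun_iint3_inner.
- by move=> x _; exact: iint2_ge0.
by apply: eq_integral => x _; rewrite -iint2Zl//; exact: measurable_fun_slice3.
Qed.

Lemma le_iint3 (G1 G2 : T * T * T -> R) :
  measurable_fun setT G1 -> measurable_fun setT G2 ->
  (forall x, 0 <= G1 x)%R -> (forall x, G1 x <= G2 x)%R -> iint3 G1 <= iint3 G2.
Proof.
move=> mG1 mG2 G10 G12.
have G20 x : (0 <= G2 x)%R by exact: le_trans (G10 x) (G12 x).
apply: ge0_le_integral => //; do ?exact: measurable_fun_iint3_inner.
  by move=> x _; exact: iint2_ge0.
by move=> x _; apply: le_iint2 => //; exact: measurable_fun_slice3.
Qed.

Lemma iint3_swap12 (G : T * T * T -> R) :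
  measurable_fun setT G -> (forall x, 0 <= G x)%R -> iint3 (G \o swap12) = iint3 G.
Proof.
move=> mG G0; pose F xy := \int[mu]_z (G (xy, z))%:E.
have mF : measurable_fun setT F by exact: measurable_fun_integral_EFin.
have F0 xy : 0 <= F xy by apply: integral_ge0 => z _; rewrite lee_fin.
exact: esym (fubini_tonelli F mF F0).
Qed.

Lemma iint3_swap23 (G : T * T * T -> R) :
  measurable_fun setT G -> (forall x, 0 <= G x)%R -> iint3 (G \o swap23) = iint3 G.
Proof.
move=> mG G0; apply: eq_integral => x _.
pose g yz := (G (x, yz.1, yz.2))%:E.
have mg : measurable_fun setT g by apply/measurable_EFinP; exact: measurable_fun_slice3.
have g0 yz : 0 <= g yz by rewrite lee_fin.
exact: esym (fubini_tonelli g mg g0).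
Qed.

Lemma iint3_rot (G : T * T * T -> R) :
  measurable_fun setT G -> (forall x, 0 <= G x)%R -> iint3 (G \o rot) = iint3 G.
Proof.
move=> mG G0; rewrite -[RHS](iint3_swap12 G mG G0) -(iint3_swap23 (G \o swap12)) //.
- exact: measurableT_comp mG measurable_swap12.
- by move=> x; exact: G0.
Qed.

Lemma measurable_sym12 (G : T * T * T -> R) :
  measurable_fun setT G -> measurable_fun setT (sym12 G).
Proof.
by move=> mG; apply: measurable_funD => //; exact: measurableT_comp mG measurable_swap12.
Qed.

Lemma measurable_cyc3 (G : T * T * T -> R) :
  measurable_fun setT G -> measurable_fun setT (cyc3 G).
Proof.
move=> mG; have mGr := measurableT_comp mG measurable_rot.
apply: measurable_funD; first exact: measurable_funD.
exact: measurableT_comp mGr measurable_rot.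
Qed.

Lemma measurable_sym3 (G : T * T * T -> R) :
  measurable_fun setT G -> measurable_fun setT (sym3 G).
Proof. by move=> mG; exact: measurable_cyc3 _ (measurable_sym12 _ mG). Qed.

Lemma sym3_ge0 (G : T * T * T -> R) x : (forall x, 0 <= G x)%R -> (0 <= sym3 G x)%R.
Proof. by move=> G0; rewrite /sym3 /cyc3 /sym12 /= !addr_ge0. Qed.

Lemma iint3_sym12 (G : T * T * T -> R) :
  measurable_fun setT G -> (forall x, 0 <= G x)%R -> iint3 (sym12 G) = iint3 G *+ 2.
Proof.
move=> mG G0; have mGs := measurableT_comp mG measurable_swap12.
rewrite (iint3D _ _ mG mGs G0) ?(iint3_swap12 _ mG G0) ?mule2n //.
by move=> x; exact: G0.
Qed.

Lemma iint3_cyc3 (G : T * T * T -> R) :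
  measurable_fun setT G -> (forall x, 0 <= G x)%R -> iint3 (cyc3 G) = iint3 G *+ 3.
Proof.
move=> mG G0; have mGr := measurableT_comp mG measurable_rot.
have mGrr := measurableT_comp mGr measurable_rot.
have Gr0 x : (0 <= (G \o rot) x)%R by exact: G0.
have Grr0 x : (0 <= (G \o rot \o rot) x)%R by exact: G0.
rewrite (iint3D _ _ _ mGrr _ Grr0); last 2 first.
- exact: measurable_funD.
- by move=> x; rewrite /= addr_ge0.
rewrite (iint3D _ _ mG mGr G0 Gr0) (iint3_rot _ mGr Gr0) (iint3_rot _ mG G0).
by rewrite !muleS mule0n adde0 addeA.
Qed.

Lemma iint3_sym3 (G : T * T * T -> R) :
  measurable_fun setT G -> (forall x, 0 <= G x)%R -> iint3 (sym3 G) = iint3 G *+ 6.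
Proof.
move=> mG G0; have mH := measurable_sym12 _ mG.
have H0 x : (0 <= sym12 G x)%R by rewrite /sym12 /= addr_ge0.
rewrite (iint3_cyc3 _ mH H0) (iint3_sym12 _ mG G0).
by rewrite !muleS mule0n !adde0 !addeA.
Qed.

Lemma le_iint3_sym3 (c : R) (G1 G2 : T * T * T -> R) : (0 <= c)%R ->
  measurable_fun setT G1 -> measurable_fun setT G2 ->
  (forall x, 0 <= G1 x)%R -> (forall x, 0 <= G2 x)%R ->
  (forall x, c * sym3 G1 x <= sym3 G2 x)%R -> c%:E * iint3 G1 <= iint3 G2.
Proof.
move=> c0 mG1 mG2 G10 G20 le12.
have msym1 := measurable_sym3 _ mG1.
have sym10 x := sym3_ge0 _ x G10.
have sym1 : iint3 (fun x => c * sym3 G1 x)%R = c%:E * (6%:R%:E * iint3 G1).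
  by rewrite (iint3Zl _ _ c0 msym1 sym10) mule_natl (iint3_sym3 _ mG1 G10).
have sym2 : iint3 (sym3 G2) = 6%:R%:E * iint3 G2.
  by rewrite mule_natl (iint3_sym3 _ mG2 G20).
rewrite -(@lee_pmul2l _ 6%:R%:E) ?lte_fin // muleCA -sym1 -sym2.
apply: le_iint3 => //.
- exact: measurable_funM.
- exact: measurable_sym3.
- by move=> x; rewrite mulr_ge0.
Qed.

End iterated_integral.

Section welfare_kernels.
Context {R : realFieldType}.

(* The posted-price mechanism trades iff s < p <= b (posted_price_kernel).  The pointwise
   inequality sym3_opt_welfare fails at ties p = s for that indicator, so we work with the
   closed one; the difference tie_gain is supported on the null set {p = s}. *)
Definition trade_gain (p s b : R) : R := (b - s) * ((s <= p) && (p <= b))%:R.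

Definition welfare_kernel (x : R * R * R) : R := x.1.2 + trade_gain x.1.1 x.1.2 x.2.

(* Welfare kernels read x as (p, s, b); opt_kernel reads it as (s, b, p), the order of
   integration in opt_welfare.  The difference disappears after symmetrization. *)
Definition opt_kernel (x : R * R * R) : R := Num.max x.1.2 x.1.1.

Definition posted_price_kernel (x : R * R * R) : R :=
  x.1.2 + (x.2 - x.1.2) * ((x.1.1 <= x.2) && (x.1.2 < x.1.1))%:R.

Definition tie_gain (x : R * R * R) : R :=
  (x.2 - x.1.2) * ((x.1.2 == x.1.1) && (x.1.1 <= x.2))%:R.

Lemma welfare_kernel_split x : welfare_kernel x = posted_price_kernel x + tie_gain x.
Proof.
rewrite /welfare_kernel /posted_price_kernel /tie_gain /trade_gain -addrA -mulrDr.
by case: ltgtP => _; rewrite /= ?andbT ?andbF ?addr0 ?add0r.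
Qed.

Lemma trade_gain_ge0 p s b : 0 <= trade_gain p s b.
Proof.
rewrite /trade_gain; case: (boolP (_ && _)) => [/andP[sp pb]|_]; last by rewrite mulr0.
by rewrite mulr1 subr_ge0 (le_trans sp pb).
Qed.

Lemma trade_gainE {p s b} : s <= p -> p <= b -> trade_gain p s b = b - s.
Proof. by move=> sp pb; rewrite /trade_gain sp pb mulr1. Qed.

Lemma welfare_kernel_ge0 x : 0 <= x.1.2 -> 0 <= welfare_kernel x.
Proof. by move=> s0; rewrite addr_ge0 // trade_gain_ge0. Qed.

Lemma posted_price_kernel_ge0 x : 0 <= x.1.2 -> 0 <= posted_price_kernel x.
Proof.
move=> s0; rewrite addr_ge0 //; case: (boolP (_ && _)) => [/andP[pb sp]|_].
  by rewrite mulr1 subr_ge0 ltW // (lt_le_trans sp pb).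
by rewrite mulr0.
Qed.

Lemma tie_gain_ge0 x : 0 <= tie_gain x.
Proof.
rewrite /tie_gain; case: (boolP (_ && _)) => [/andP[/eqP-> pb]|_]; last by rewrite mulr0.
by rewrite mulr1 subr_ge0.
Qed.

Lemma opt_kernel_ge0 x : 0 <= x.1.1 -> 0 <= opt_kernel x.
Proof. by move=> x0; rewrite le_max x0 orbT. Qed.

Lemma sym3_opt_welfare_sorted {a b c} : 0 <= a -> a <= b -> b <= c ->
  3 / 4 * sym3 opt_kernel (a, b, c) <= sym3 welfare_kernel (a, b, c).
Proof.
move=> a0 ab bc; have ac := le_trans ab bc.
rewrite /sym3 /cyc3 /sym12 /swap12 /rot /opt_kernel /welfare_kernel /=.
rewrite (max_r ab) (max_l ab) (max_r bc) (max_l bc) (max_r ac) (max_l ac).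
rewrite (trade_gainE ab bc).
have := trade_gain_ge0 a b c; have := trade_gain_ge0 a c b; have := trade_gain_ge0 b c a.
have := trade_gain_ge0 c a b; have := trade_gain_ge0 c b a.
lra.
Qed.

Lemma sym3_opt_welfare x : 0 <= x.1.1 -> 0 <= x.1.2 -> 0 <= x.2 ->
  3 / 4 * sym3 opt_kernel x <= sym3 welfare_kernel x.
Proof.
case: x => [[p s] b] /= p0 s0 b0.
have [ps|sp] := leP p s; have [sb|bs] := leP s b; have [pb|bp] := leP p b;
  [ move: (sym3_opt_welfare_sorted p0 ps sb)
  | lra
  | move: (sym3_opt_welfare_sorted p0 pb (ltW bs))
  | move: (sym3_opt_welfare_sorted b0 (ltW bp) ps)
  | move: (sym3_opt_welfare_sorted s0 (ltW sp) pb)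
  | move: (sym3_opt_welfare_sorted s0 sb (ltW bp))
  | lra
  | move: (sym3_opt_welfare_sorted b0 (ltW bs) (ltW sp)) ];
  rewrite /sym3 /cyc3 /sym12 /swap12 /rot /opt_kernel /welfare_kernel /=; lra.
Qed.

End welfare_kernels.

Lemma measurable_fun_natr_bool d (T : measurableType d) (R : realType) (P : T -> bool) :
  measurable_fun setT P -> measurable_fun setT (fun x => (P x)%:R : R).
Proof.
move=> mP; have -> : (fun x => (P x)%:R : R) = (fun x => if P x then 1 else 0).
  by apply/funext => x; case: (P x).
exact: measurable_fun_ifT.
Qed.

Section measurable_kernels.
Variable R : realType.

Let mp : measurable_fun setT (fun x : R * R * R => x.1.1) := measurable_fst_fst.
Let ms : measurable_fun setT (fun x : R * R * R => x.1.2) := measurable_snd_fst.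
Let mb : measurable_fun setT (fun x : R * R * R => x.2) := measurable_snd.

Lemma measurable_opt_kernel : measurable_fun setT (@opt_kernel R).
Proof. exact: measurable_maxr. Qed.

Lemma measurable_welfare_kernel : measurable_fun setT (@welfare_kernel R).
Proof.
apply: measurable_funD => //; apply: measurable_funM; first exact: measurable_funB.
by apply: measurable_fun_natr_bool; apply: measurable_and; exact: measurable_fun_ler.
Qed.

Lemma measurable_posted_price_kernel : measurable_fun setT (@posted_price_kernel R).
Proof.
apply: measurable_funD => //; apply: measurable_funM; first exact: measurable_funB.
apply: measurable_fun_natr_bool; apply: measurable_and.
- exact: measurable_fun_ler.
- exact: measurable_fun_ltr.
Qed.

Lemma measurable_tie_gain : measurable_fun setT (@tie_gain R).
Proof.
apply: measurable_funM; first exact: measurable_funB.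
apply: measurable_fun_natr_bool; apply: measurable_and.
- exact: measurable_fun_eqr.
- exact: measurable_fun_ler.
Qed.

End measurable_kernels.

Lemma iint3_eq0_off_diag12 {R : realType} (G : R * R * R -> R) :
  measurable_fun setT G -> (forall x, 0 <= G x) ->
  (forall x, x.1.1 != x.1.2 -> G x = 0) -> iint3 lebesgue_measure G = 0%E.
Proof.
move=> mG G0 Goff; rewrite -iint3_swap23 //.
apply: integral0_eq => p _; apply: integral0_eq => y _.
have mGy : measurable_fun setT (fun z => (G (p, z, y))%:E).
  apply/measurable_EFinP; apply: measurableT_comp mG _.
  by apply: measurable_fun_pair => //; apply: measurable_fun_pair.
rewrite -(@integral_setD1 _ _ p); last 2 first.
- exact: measurableD.
- exact: measurable_funS mGy.
by apply: integral0_eq => z [_ /eqP zp]; rewrite /= /swap23 /= Goff // eq_sym.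
Qed.

Section posted_price.
Variables (R : realType) (f : R -> R).
Hypothesis f_density : is_density_on_nonneg f.
Notation mu := (@lebesgue_measure R).

Let mf : measurable_fun setT f. Proof. by case: f_density. Qed.
Let f_ge0 x : 0 <= f x. Proof. by case: f_density. Qed.
Let f_neg x : x < 0 -> f x = 0. Proof. by case: f_density => _ _ + _; apply. Qed.
Let f_int1 : (\int[mu]_x (f x)%:E = 1)%E. Proof. by case: f_density. Qed.

Lemma mul_density_ge0 x r : (0 <= x -> 0 <= r) -> 0 <= f x * r.
Proof.
move=> r0; have [x0|x0] := ltP x 0; first by rewrite f_neg // mul0r.
by rewrite mulr_ge0 // r0.
Qed.

Lemma integral_mul_density (c : R) : 0 <= c -> (\int[mu]_x (c * f x)%:E = c%:E)%E.
Proof.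
move=> c0; under eq_integral do rewrite EFinM.
rewrite ge0_integralZl_EFin // ?f_int1 ?mule1 //; last exact/measurable_EFinP.
by move=> x _; rewrite lee_fin.
Qed.

Definition density3 (x : R * R * R) : R := f x.1.1 * f x.1.2 * f x.2.

Lemma density3_swap12 x : density3 (swap12 x) = density3 x.
Proof. by rewrite /density3 /swap12 /= (mulrC (f x.1.2)). Qed.

Lemma density3_rot x : density3 (rot x) = density3 x.
Proof. by rewrite /density3 /rot /=; ring. Qed.

Lemma measurable_density3 : measurable_fun setT density3.
Proof.
apply: measurable_funM; first apply: measurable_funM.
- exact: measurableT_comp mf measurable_fst_fst.
- exact: measurableT_comp mf measurable_snd_fst.
- exact: measurableT_comp mf measurable_snd.
Qed.

Lemma ler_density3_mul x r r' :
  (0 <= x.1.1 -> 0 <= x.1.2 -> 0 <= x.2 -> r <= r') -> density3 x * r <= density3 x * r'.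
Proof.
move=> le_r; rewrite /density3.
have [x1|x1] := ltP x.1.1 0; first by rewrite f_neg // !mul0r.
have [x2|x2] := ltP x.1.2 0; first by rewrite (f_neg _ x2) mulr0 !mul0r.
have [x3|x3] := ltP x.2 0; first by rewrite (f_neg _ x3) mulr0 !mul0r.
by rewrite ler_wpM2l ?mulr_ge0 // le_r.
Qed.

Lemma density3_mul_ge0 x r : (0 <= x.1.1 -> 0 <= x.1.2 -> 0 <= x.2 -> 0 <= r) ->
  0 <= density3 x * r.
Proof. by move=> r0; have := @ler_density3_mul x 0 r r0; rewrite mulr0. Qed.

Lemma opt_welfareE : opt_welfare f = iint3 mu (density3 \* opt_kernel).
Proof.
apply: eq_integral => s _; apply: eq_integral => b _.
rewrite -integral_mul_density; last first.
  by rewrite mulrC; apply: mul_density_ge0 => s0; rewrite mulr_ge0 // le_max s0 orbT.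
by apply: eq_integral => p _; rewrite /density3 /opt_kernel /=; congr EFin; ring.
Qed.

Lemma expected_random_price_welfare_posted :
  expected_random_price_welfare f = iint3 mu (density3 \* posted_price_kernel).
Proof.
apply: eq_integral => p _.
pose seller z : R := z.1 * f z.1 * f z.2.
pose trade z : R := (z.2 - z.1) * ((p <= z.2) && (z.1 < p))%:R * f z.2 * f z.1.
have mf1 := measurableT_comp mf (@measurable_fst _ _ R R).
have mf2 := measurableT_comp mf (@measurable_snd _ _ R R).
have m_seller : measurable_fun setT seller.
  by apply: measurable_funM => //; apply: measurable_funM.
have m_trade : measurable_fun setT trade.
  apply: measurable_funM => //; apply: measurable_funM => //.
  apply: measurable_funM; first exact: measurable_funB.
  apply: measurable_fun_natr_bool; apply: measurable_and.
  - exact: measurable_fun_ler.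
  - exact: measurable_fun_ltr.
have seller0 z : 0 <= seller z.
  by rewrite /seller -mulrA mulrCA; apply: mul_density_ge0 => s0; rewrite mulr_ge0.
have trade0 z : 0 <= trade z.
  rewrite /trade; case: (boolP (_ && _)) => [/andP[pb sp]|_]; last by rewrite !mulr0 !mul0r.
  by rewrite mulr1 !mulr_ge0 // subr_ge0 ltW // (lt_le_trans sp pb).
have -> : welfare p f = iint2 mu seller + iint2 mu trade.
  congr (_ + _); apply: eq_integral => s _.
  by rewrite /seller /= integral_mul_density // mulrC; apply: mul_density_ge0.
rewrite -(iint2D mu _ _ m_seller m_trade seller0 trade0).
rewrite -iint2Zl //; [|exact: measurable_funD|by move=> z; rewrite /= addr_ge0].
congr (iint2 _ _); apply/funext => -[s b].
by rewrite /seller /trade /density3 /posted_price_kernel /=; ring.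
Qed.

Lemma expected_random_price_welfareE :
  expected_random_price_welfare f = iint3 mu (density3 \* welfare_kernel).
Proof.
have m_posted : measurable_fun setT (density3 \* posted_price_kernel).
  exact: measurable_funM measurable_density3 (measurable_posted_price_kernel R).
have m_tie : measurable_fun setT (density3 \* tie_gain).
  exact: measurable_funM measurable_density3 (measurable_tie_gain R).
have posted0 x : 0 <= (density3 \* posted_price_kernel) x.
  by apply: density3_mul_ge0 => _ s0 _; exact: posted_price_kernel_ge0.
have tie0 x : 0 <= (density3 \* tie_gain) x.
  by apply: density3_mul_ge0 => _ _ _; exact: tie_gain_ge0.
have tie_off x : x.1.1 != x.1.2 -> (density3 \* tie_gain) x = 0.
  by rewrite eq_sym => /negbTE sp; rewrite /= /tie_gain sp /= !mulr0.
have -> : density3 \* welfare_kernel =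
    (density3 \* posted_price_kernel) \+ (density3 \* tie_gain).
  by apply/funext => x; rewrite /= welfare_kernel_split mulrDr.
rewrite expected_random_price_welfare_posted (iint3D mu _ _ m_posted m_tie posted0 tie0).
by rewrite (iint3_eq0_off_diag12 _ m_tie tie0 tie_off) adde0.
Qed.

Lemma random_price_welfare_ge :
  ((3 / 4)%:E * iint3 mu (density3 \* opt_kernel)%R
    <= iint3 mu (density3 \* welfare_kernel)%R)%E.
Proof.
apply: le_iint3_sym3 => //.
- exact: measurable_funM measurable_density3 (measurable_opt_kernel R).
- exact: measurable_funM measurable_density3 (measurable_welfare_kernel R).
- by move=> x; apply: density3_mul_ge0 => p0 _ _; exact: opt_kernel_ge0.
- by move=> x; apply: density3_mul_ge0 => _ s0 _; exact: welfare_kernel_ge0.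
move=> x; rewrite (sym3_mull _ _ density3_swap12 density3_rot).
rewrite (sym3_mull _ _ density3_swap12 density3_rot) /= mulrCA.
exact: ler_density3_mul (sym3_opt_welfare x).
Qed.

End posted_price.

Theorem theorem2 (R : realType) (f : R -> R) (m : R) :
  is_density_on_nonneg f ->
  (0 < m)%R -> mean f = m%:E ->
  ((3 / 4 : R)%:E * opt_welfare f <= expected_random_price_welfare f)%E.
Proof.
move=> f_density _ _.
rewrite (opt_welfareE _ _ f_density) (expected_random_price_welfareE _ _ f_density).
exact: random_price_welfare_ge.
Qed.
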